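(* Let $A$ be a densely defined closed operator in a complex Hilbert space $\mathcal{H}$ such that $\operatorname{Num}(A)$ has an interior point, $\operatorname{Num}(A)\neq\mathbb{C}$, and $\operatorname{D}(A)\subset\operatorname{D}(A^* )$. If $\lambda\in\partial\operatorname{Num}(A)$ is a point of unilateral infinite curvature of $\partial\overline{\operatorname{Num}}(A)$, then $\lambda\in\sigma(A)$.
   Context: $\operatorname{Num}(A)=\{\langle Af,f\rangle: f\in\operatorname{D}(A),\|f\|=1\}$ is the numerical range, $\overline{\operatorname{Num}}(A)$ its closure, $A^*$ the adjoint, $\sigma(A)$ the spectrum. Curvature conventions. Let $\Omega\subset\mathbb{C}$ be a closed convex set with nonempty interior and $\lambda\in\partial\Omega$. There is at least one supporting line of $\Omega$ through $\lambda$; $\lambda$ is called a corner point if there is more than one. If $\lambda$ is a corner point, $\Omega$ lies in a closed sector with vertex $\lambda$ and semivertical angle $<\pi/2$; take the smallest such sector and let $l_\lambda$ be the supporting line through $\lambda$ orthogonal to the axis of this sector; otherwise $l_\lambda$ is the unique supporting line. Use rectangular coordinates $(\xi,\eta)$ with origin at $\lambda$, $\xi$-axis equal to $l_\lambda$, oriented so that $\Omega\subset\{\eta\ge 0\}$. Let $D'_\varepsilon=\{(\xi,\eta):\xi^2+\eta^2\le\varepsilon^2,\ \xi\neq 0\}$. Define $\gamma_u^+(\lambda)=\lim_{\varepsilon\downarrow 0}\sup\{\eta/\xi^2:(\xi,\eta)\in\partial\Omega\cap D'_\varepsilon,\ \xi>0\}$ and $\gamma_l^+(\lambda)$ the same with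 $\inf$ in place of $\sup$; $\gamma_u^-(\lambda),\gamma_l^-(\lambda)$ are defined analogously with $\xi<0$. Set $\gamma_u(\lambda)=\max(\gamma_u^+(\lambda),\gamma_u^-(\lambda))$, $\gamma_l(\lambda)=\min(\gamma_l^+(\lambda),\gamma_l^-(\lambda))$. The point $\lambda$ is of infinite upper curvature if $\gamma_u(\lambda)=\infty$, and of unilateral infinite curvature if $\gamma_l^+(\lambda)=\infty$ or $\gamma_l^-(\lambda)=\infty$. For an operator $A$, these notions at $\lambda\in\partial\operatorname{Num}(A)$ refer to $\Omega=\overline{\operatorname{Num}}(A)$. *)

From Stdlib Require Import Reals.
Open Scope R_scope.

Record Cx := mkCx { re : R; im : R }.
Definition Czero : Cx := mkCx 0 0.
Definition Cone : Cx := mkCx 1 0.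
Definition Cadd (a b : Cx) : Cx := mkCx (re a + re b) (im a + im b).
Definition Copp (a : Cx) : Cx := mkCx (- re a) (- im a).
Definition Csub (a b : Cx) : Cx := Cadd a (Copp b).
Definition Cmul (a b : Cx) : Cx :=
  mkCx (re a * re b - im a * im b) (re a * im b + im a * re b).
Definition Cconj (a : Cx) : Cx := mkCx (re a) (- im a).
Definition Cabs (a : Cx) : R := sqrt (re a * re a + im a * im a).

(** * Complex Hilbert spaces (inner product linear in the first slot) *)
Record CHilbert := {
  hcar :> Type;
  hzero : hcar;
  hadd : hcar -> hcar -> hcar;
  hopp : hcar -> hcar;
  hscal : Cx -> hcar -> hcar;
  hinner : hcar -> hcar -> Cx;
  hadd_assoc : forall x y z, hadd x (hadd y z) = hadd (hadd x y) z;
  hadd_comm : forall x y, hadd x y = hadd y x;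
  hadd_0 : forall x, hadd x hzero = x;
  hadd_opp : forall x, hadd x (hopp x) = hzero;
  hscal_1 : forall x, hscal Cone x = x;
  hscal_assoc : forall a b x, hscal a (hscal b x) = hscal (Cmul a b) x;
  hscal_distr_l : forall a x y, hscal a (hadd x y) = hadd (hscal a x) (hscal a y);
  hscal_distr_r : forall a b x, hscal (Cadd a b) x = hadd (hscal a x) (hscal b x);
  hinner_add_l : forall x y z, hinner (hadd x y) z = Cadd (hinner x z) (hinner y z);
  hinner_scal_l : forall a x y, hinner (hscal a x) y = Cmul a (hinner x y);
  hinner_conj : forall x y, hinner y x = Cconj (hinner x y);
  hinner_pos : forall x, 0 <= re (hinner x x);
  hinner_def : forall x, re (hinner x x) = 0 -> x = hzero;
  hcomplete : forall u : nat -> hcar,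
    (forall eps, 0 < eps -> exists N, forall m n, (N <= m)%nat -> (N <= n)%nat ->
       sqrt (re (hinner (hadd (u m) (hopp (u n))) (hadd (u m) (hopp (u n))))) < eps) ->
    exists l, forall eps, 0 < eps -> exists N, forall n, (N <= n)%nat ->
       sqrt (re (hinner (hadd (u n) (hopp l)) (hadd (u n) (hopp l)))) < eps
}.

Section Ops.
Variable H : CHilbert.

Definition hsub (x y : H) : H := hadd H x (hopp H y).
Definition hnorm (x : H) : R := sqrt (re (hinner H x x)).

Definition hconv (u : nat -> H) (l : H) : Prop :=
  forall eps, 0 < eps -> exists N, forall n, (N <= n)%nat -> hnorm (hsub (u n) l) < eps.

Definition linear_operator (D : H -> Prop) (A : H -> H) : Prop :=
  D (hzero H) /\
  (forall x y, D x -> D y -> D (hadd H x y)) /\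
  (forall a x, D x -> D (hscal H a x)) /\
  (forall x y, D x -> D y -> A (hadd H x y) = hadd H (A x) (A y)) /\
  (forall a x, D x -> A (hscal H a x) = hscal H a (A x)).

Definition densely_defined (D : H -> Prop) : Prop :=
  forall x eps, 0 < eps -> exists y, D y /\ hnorm (hsub x y) < eps.

Definition closed_operator (D : H -> Prop) (A : H -> H) : Prop :=
  forall (u : nat -> H) f g, (forall n, D (u n)) -> hconv u f ->
    hconv (fun n => A (u n)) g -> D f /\ A f = g.

Definition adjoint_domain (D : H -> Prop) (A : H -> H) (g : H) : Prop :=
  exists h, forall f, D f -> hinner H (A f) g = hinner H f h.

Definition Num (D : H -> Prop) (A : H -> H) (z : Cx) : Prop :=
  exists f, D f /\ hnorm f = 1 /\ hinner H (A f) f = z.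

Definition resolvent (D : H -> Prop) (A : H -> H) (lam : Cx) : Prop :=
  exists B : H -> H,
    (forall x y, B (hadd H x y) = hadd H (B x) (B y)) /\
    (forall a x, B (hscal H a x) = hscal H a (B x)) /\
    (exists M, forall x, hnorm (B x) <= M * hnorm x) /\
    (forall x, D (B x) /\ hsub (A (B x)) (hscal H lam (B x)) = x) /\
    (forall f, D f -> B (hsub (A f) (hscal H lam f)) = f).

Definition spectrum (D : H -> Prop) (A : H -> H) (lam : Cx) : Prop :=
  ~ resolvent D A lam.

End Ops.

Definition Cclosure (S : Cx -> Prop) (z : Cx) : Prop :=
  forall eps, 0 < eps -> exists w, S w /\ Cabs (Csub z w) < eps.
Definition Cinterior (S : Cx -> Prop) (z : Cx) : Prop :=
  exists eps, 0 < eps /\ forall w, Cabs (Csub w z) < eps -> S w.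
Definition Cboundary (S : Cx -> Prop) (z : Cx) : Prop :=
  Cclosure S z /\ ~ Cinterior S z.

(** [n] is a unit inward normal of a supporting line of Omega through lam:
    the line {z | Re((z-lam) conj n) = 0} supports Omega and Omega lies in
    the closed half-plane {Re((z-lam) conj n) >= 0}. *)
Definition supp_normal (Om : Cx -> Prop) (lam n : Cx) : Prop :=
  Cabs n = 1 /\ forall z, Om z -> 0 <= re (Cmul (Csub z lam) (Cconj n)).

Definition corner_point (Om : Cx -> Prop) (lam : Cx) : Prop :=
  exists n1 n2, supp_normal Om lam n1 /\ supp_normal Om lam n2 /\
    n1 <> n2 /\ n1 <> Copp n2.

(** closed sector with vertex lam, unit axis direction a, and semivertical
    angle theta with c = cos theta (so 0 < c <-> theta < pi/2) *)
Definition sector (lam a : Cx) (c : R) (z : Cx) : Prop :=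
  c * Cabs (Csub z lam) <= re (Cmul (Csub z lam) (Cconj a)).

(** [n] is the (inward) unit normal of the distinguished line l_lam:
    - if lam is a corner point, n is the axis direction of the smallest closed
      sector with vertex lam and semivertical angle < pi/2 containing Omega,
      so l_lam (the line through lam orthogonal to the axis) has normal n;
    - otherwise l_lam is the unique supporting line, with inward normal n. *)
Definition l_normal (Om : Cx -> Prop) (lam n : Cx) : Prop :=
  supp_normal Om lam n /\
  (corner_point Om lam ->
     exists c, 0 < c /\ (forall z, Om z -> sector lam n c z) /\
       forall a c', Cabs a = 1 -> 0 < c' -> (forall z, Om z -> sector lam a c' z) ->
         forall z, sector lam n c z -> sector lam a c' z).

(** coordinates (xi, eta) with origin lam, xi-axis = l_lam, Omega in eta >= 0 *)
Definition xi_c (lam n z : Cx) : R := im (Cmul (Csub z lam) (Cconj n)).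
Definition eta_c (lam n z : Cx) : R := re (Cmul (Csub z lam) (Cconj n)).

(** gamma_l^+(lam) = +infinity, with inf unfolded:
    lim_{eps -> 0+} inf { eta/xi^2 : (xi,eta) in dOmega, xi^2+eta^2 <= eps^2, xi > 0 } = +oo *)
Definition gamma_l_plus_infinite (Om : Cx -> Prop) (lam n : Cx) : Prop :=
  forall M : R, exists delta, 0 < delta /\ forall eps, 0 < eps < delta ->
    forall z, Cboundary Om z ->
      let xi := xi_c lam n z in let eta := eta_c lam n z in
      xi * xi + eta * eta <= eps * eps -> 0 < xi -> M <= eta / (xi * xi).

Definition gamma_l_minus_infinite (Om : Cx -> Prop) (lam n : Cx) : Prop :=
  forall M : R, exists delta, 0 < delta /\ forall eps, 0 < eps < delta ->
    forall z, Cboundary Om z ->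
      let xi := xi_c lam n z in let eta := eta_c lam n z in
      xi * xi + eta * eta <= eps * eps -> xi < 0 -> M <= eta / (xi * xi).

Definition unilateral_infinite_curvature (Om : Cx -> Prop) (lam : Cx) : Prop :=
  exists n, l_normal Om lam n /\
    (gamma_l_plus_infinite Om lam n \/ gamma_l_minus_infinite Om lam n).

(* If lam were in the resolvent set, take a unit vector f with <Af, f> within a
   small eta0 of lam and g = (A - lam)^-1 f.  Along the pencil x = f + tau n g, where n
   is the inner normal of l_lam, the form <(A - lam) x, x>, rotated by conj n, is a
   quadratic polynomial in tau whose linear part contains tau itself.  Since Num(A)
   lies in the supporting half-plane, the remaining linear coefficient is
   O(sqrt eta0); hence at tau = +-i s the Rayleigh quotient moves a distance of order
   s along l_lam while rising only O(s^2) above it, with constants controlled by the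
   norm of the resolvent.  This contradicts infinite curvature on that side, because
   every point of the closure of Num(A) lies above a boundary point with the same
   abscissa. *)

From Stdlib Require Import Reals Lra Nsatz Classical.
Open Scope R_scope.

Lemma Cx_eq (a b : Cx) : re a = re b -> im a = im b -> a = b.
Proof. destruct a, b; simpl; intros; subst; reflexivity. Qed.

Lemma Cabs_sq (z : Cx) : Cabs z * Cabs z = re z * re z + im z * im z.
Proof. unfold Cabs. apply sqrt_sqrt. nra. Qed.

Lemma Cabs_unit (n : Cx) : Cabs n = 1 -> re n * re n + im n * im n = 1.
Proof. intro Hn. rewrite <- Cabs_sq, Hn. ring. Qed.

Lemma Cabs_rotate (z n : Cx) : Cabs n = 1 ->
  re (Cmul z (Cconj n)) * re (Cmul z (Cconj n)) +
  im (Cmul z (Cconj n)) * im (Cmul z (Cconj n)) = Cabs z * Cabs z.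
Proof.
  intro Hn. apply Cabs_unit in Hn. rewrite Cabs_sq.
  destruct z as [z1 z2], n as [n1 n2]; simpl in *. nsatz.
Qed.

Lemma Cabs_Csub_sym (z w : Cx) : Cabs (Csub z w) = Cabs (Csub w z).
Proof. unfold Cabs, Csub, Cadd, Copp; simpl. f_equal. ring. Qed.

Lemma Cclosure_self (S : Cx -> Prop) z : S z -> Cclosure S z.
Proof.
  intros Hz eps Heps. exists z. split; [exact Hz|].
  unfold Cabs, Csub, Cadd, Copp; simpl.
  replace ((re z + - re z) * (re z + - re z) + (im z + - im z) * (im z + - im z)) with 0
    by ring.
  rewrite sqrt_0. exact Heps.
Qed.

Lemma boundary_below (Om : Cx -> Prop) (lam n z : Cx) :
  supp_normal Om lam n -> Om z ->
  exists z', Cboundary Om z' /\ xi_c lam n z' = xi_c lam n z /\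
    0 <= eta_c lam n z' <= eta_c lam n z.
Proof.
  intros [Hn Hs] Hz. apply Cabs_unit in Hn.
  set (sh := fun tau => mkCx (re z - tau * re n) (im z - tau * im n)).
  assert (Heta : forall tau, eta_c lam n (sh tau) = eta_c lam n z - tau).
  { intro tau. unfold eta_c, sh, Cmul, Csub, Cadd, Copp, Cconj; simpl.
    destruct n as [n1 n2]; simpl in *. nsatz. }
  assert (Hxi : forall tau, xi_c lam n (sh tau) = xi_c lam n z).
  { intro tau. unfold xi_c, sh, Cmul, Csub, Cadd, Copp, Cconj; simpl. ring. }
  assert (Hdist : forall a b, Cabs (Csub (sh a) (sh b)) = Rabs (a - b)).
  { intros a b. unfold Cabs, Csub, Cadd, Copp, sh; simpl.
    rewrite <- sqrt_Rsqr_abs. f_equal. unfold Rsqr.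
    destruct n as [n1 n2]; simpl in *. nsatz. }
  (* [sh m], with [m] the largest admissible shift along -n, is on the boundary. *)
  set (E := fun tau => 0 <= tau /\ Om (sh tau)).
  assert (HE0 : E 0).
  { split; [lra|]. replace (sh 0) with z; [exact Hz|].
    apply Cx_eq; simpl; ring. }
  assert (HEub : is_upper_bound E (eta_c lam n z)).
  { intros tau [_ Htau]. apply Hs in Htau. fold (eta_c lam n (sh tau)) in Htau.
    rewrite Heta in Htau. lra. }
  destruct (completeness E (ex_intro _ _ HEub) (ex_intro _ _ HE0)) as [m [Hub Hlub]].
  assert (Hm : 0 <= m <= eta_c lam n z) by (split; [apply Hub, HE0|apply Hlub, HEub]).
  exists (sh m). split; [split|].
  - intros eps Heps.
    destruct (classic (exists tau, E tau /\ m - eps < tau)) as [[tau [Htau Hlt]]|Hnone].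
    + exists (sh tau). split; [apply Htau|]. rewrite Hdist.
      pose proof (Hub tau Htau). apply Rabs_def1; lra.
    + assert (m <= m - eps); [|lra].
      apply Hlub. intros tau Htau. apply Rnot_lt_le. intro Hlt. eauto.
  - intros [e [He Hin]].
    assert (Hfar : E (m + e / 2)).
    { split; [lra|]. apply Hin. rewrite Hdist, Rabs_right; lra. }
    apply Hub in Hfar. lra.
  - rewrite Hxi, Heta. split; [reflexivity|lra].
Qed.

Definition above_parabola (Om : Cx -> Prop) (lam n : Cx) (sg M eps : R) : Prop :=
  forall z, Om z ->
    let xi := xi_c lam n z in let eta := eta_c lam n z in
    xi * xi + eta * eta <= eps * eps -> 0 < sg * xi -> M * (xi * xi) <= eta.

Definition curves_away (Om : Cx -> Prop) (lam n : Cx) (sg : R) : Prop :=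
  forall M, exists eps, 0 < eps /\ above_parabola Om lam n sg M eps.

Lemma unilateral_curves_away (Om : Cx -> Prop) (lam n : Cx) :
  gamma_l_plus_infinite Om lam n \/ gamma_l_minus_infinite Om lam n ->
  exists sg, (sg = 1 \/ sg = -1) /\ curves_away (Cboundary Om) lam n sg.
Proof.
  assert (Hmul : forall M xi eta, xi <> 0 -> M <= eta / (xi * xi) -> M * (xi * xi) <= eta).
  { intros M xi eta Hxi Hle. assert (Hsq : 0 < xi * xi) by nra.
    apply Rmult_le_compat_r with (r := xi * xi) in Hle; [|lra].
    unfold Rdiv in Hle. rewrite Rmult_assoc, Rinv_l in Hle; lra. }
  intros [Hg | Hg]; [exists 1 | exists (-1)]; (split; [lra|]);
    intro M; destruct (Hg M) as [delta [Hdelta Hbound]];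
    exists (delta / 2); (split; [lra|]); intros z Hz xi eta Hnear Hside;
    unfold xi, eta in *; (apply Hmul; [intro; nra|]);
    (apply (Hbound (delta / 2)); [lra | exact Hz | exact Hnear | lra]).
Qed.

Lemma curves_away_boundary (Om : Cx -> Prop) (lam n : Cx) (sg : R) :
  supp_normal Om lam n -> curves_away (Cboundary Om) lam n sg -> curves_away Om lam n sg.
Proof.
  intros Hsupp Hcurv M. destruct (Hcurv M) as [eps [Heps Hbound]].
  exists eps. split; [exact Heps|]. intros z Hz xi eta Hnear Hside.
  unfold xi, eta in *. clear xi eta.
  destruct (boundary_below Om lam n z Hsupp Hz) as [z' [Hz' [Hxi Heta]]].
  assert (Hbelow : M * (xi_c lam n z * xi_c lam n z) <= eta_c lam n z').
  { pose proof (Hbound z' Hz') as Hb. cbv zeta in Hb. rewrite Hxi in Hb.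
    apply Hb; [nra | exact Hside]. }
  lra.
Qed.

(* For x = f + (t1 + i t2) n g with (A - lam) g = f and <f, f> = 1, these are
   <x, x> and the two coordinates of <(A - lam) x, x> conj n.  The term [2 * t2] comes
   from <(A - lam) (tau n g), f> conj n = tau, whose real part is absorbed in [d1]. *)
Section Pencil.
Variables a1 a2 d1 d2 b1 b2 G : R.

Definition pencil_norm (t1 t2 : R) : R :=
  1 + 2 * (t1 * b1 + t2 * b2) + (t1 * t1 + t2 * t2) * G.
Definition pencil_eta (t1 t2 : R) : R :=
  a1 + t1 * d1 + t2 * d2 + (t1 * t1 + t2 * t2) * b1.
Definition pencil_xi (t1 t2 : R) : R :=
  a2 + t1 * d2 - t2 * d1 + 2 * t2 + (t1 * t1 + t2 * t2) * b2.

Lemma pencil_norm_coef_bound :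
  (forall t1 t2, 0 <= pencil_norm t1 t2) ->
  - ((1 + G) / 2) <= b1 <= (1 + G) / 2 /\ - ((1 + G) / 2) <= b2 <= (1 + G) / 2.
Proof.
  intro Hpos. unfold pencil_norm in Hpos.
  pose proof (Hpos 1 0). pose proof (Hpos (-1) 0).
  pose proof (Hpos 0 1). pose proof (Hpos 0 (-1)).
  lra.
Qed.

Lemma pencil_eta_linear_coef (B : R) : 0 < B -> b1 <= B ->
  (forall t1 t2, 0 <= pencil_eta t1 t2) -> d1 * d1 + d2 * d2 <= 4 * B * a1.
Proof.
  intros HB Hb Hpos. unfold pencil_eta in Hpos.
  set (r := / (2 * B)). set (dd := d1 * d1 + d2 * d2).
  assert (Hr : 2 * B * r = 1) by (unfold r; field; lra).
  assert (Hr0 : 0 < r) by (unfold r; apply Rinv_0_lt_compat; lra).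
  assert (Hdd : 0 <= dd) by (unfold dd; nra).
  pose proof (Hpos (- r * d1) (- r * d2)) as Hmin.
  replace (a1 + - r * d1 * d1 + - r * d2 * d2 +
           (- r * d1 * (- r * d1) + - r * d2 * (- r * d2)) * b1)
    with (a1 - r * dd + r * r * dd * b1) in Hmin by (unfold dd; ring).
  assert (Hquad : r * r * dd * b1 <= r * r * dd * B)
    by (apply Rmult_le_compat_l; [nra | exact Hb]).
  assert (Hhalf : r * r * dd * B = r * dd / 2).
  { transitivity (r * dd * (2 * B * r) / 2); [field | rewrite Hr; field]. }
  assert (Hdd2 : dd = 2 * B * (r * dd)) by (rewrite <- Rmult_assoc, Hr; ring).
  rewrite Hdd2. nra.
Qed.

Lemma pencil_vertical_estimates (B s sg : R) :
  1 <= B -> 0 <= G <= B -> (forall t1 t2, 0 <= pencil_norm t1 t2) ->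
  0 < s -> s * B <= / 8 ->
  a1 * a1 + a2 * a2 <= (s * s / (64 * B)) * (s * s / (64 * B)) ->
  (sg = 1 \/ sg = -1) -> (forall t1 t2, 0 <= pencil_eta t1 t2) ->
  pencil_eta 0 (sg * s) <= s * s * (B + 1) /\
  s <= sg * pencil_xi 0 (sg * s) <= 3 * s /\
  / 2 <= pencil_norm 0 (sg * s) <= 2.
Proof.
  intros HB HG Hnorm Hs HsB Ha Hsg Hpos.
  destruct (pencil_norm_coef_bound Hnorm) as [Hb1 Hb2].
  set (e := s * s / (64 * B)) in *.
  assert (He : 0 < e) by (unfold e; apply Rdiv_lt_0_compat; nra).
  assert (He64 : e <= s * s / 64).
  { unfold e, Rdiv. apply Rmult_le_compat_l; [nra|]. apply Rinv_le_contravar; lra. }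
  assert (Ha1 : - e <= a1 <= e) by (split; nra).
  assert (Ha2 : - e <= a2 <= e) by (split; nra).
  assert (Hd : d1 * d1 + d2 * d2 <= s * s / 16).
  { apply Rle_trans with (4 * B * a1).
    - apply (pencil_eta_linear_coef B); [lra | lra | exact Hpos].
    - replace (s * s / 16) with (4 * B * e) by (unfold e; field; lra). nra. }
  assert (Hd1 : - (s * s / 4) <= s * d1 <= s * s / 4) by (split; nra).
  assert (Hd2 : - (s * s / 4) <= s * d2 <= s * s / 4) by (split; nra).
  assert (Hs8 : s * s <= s / 8) by nra.
  assert (HssB : s * s * B <= s / 8) by nra.
  assert (Hsb1 : s * s * b1 <= s * s * B) by nra.
  assert (Hsb2 : - (s * s * B) <= s * s * b2 <= s * s * B) by (split; nra).
  assert (Hsb2' : - (s * B) <= s * b2 <= s * B) by (split; nra).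
  assert (HsG : 0 <= s * s * G <= s * s * B) by (split; nra).
  assert (Hs1 : s <= / 8) by nra.
  unfold pencil_eta, pencil_xi, pencil_norm.
  destruct Hsg as [-> | ->]; repeat split; lra.
Qed.

Lemma pencil_flat_point (B s sg eps : R) :
  1 <= B -> 0 <= G <= B -> (forall t1 t2, 0 <= pencil_norm t1 t2) ->
  0 < s -> s * B <= / 8 -> 7 * s <= eps ->
  a1 * a1 + a2 * a2 <= (s * s / (64 * B)) * (s * s / (64 * B)) ->
  (sg = 1 \/ sg = -1) -> (forall t1 t2, 0 <= pencil_eta t1 t2) ->
  exists t1 t2, 0 < pencil_norm t1 t2 /\
    pencil_xi t1 t2 * pencil_xi t1 t2 + pencil_eta t1 t2 * pencil_eta t1 t2
      <= eps * eps * (pencil_norm t1 t2 * pencil_norm t1 t2) /\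
    0 < sg * pencil_xi t1 t2 /\
    pencil_eta t1 t2 * pencil_norm t1 t2 < (2 * B + 3) * (pencil_xi t1 t2 * pencil_xi t1 t2).
Proof.
  intros HB HG Hnorm Hs HsB Heps Ha Hsg Hpos.
  destruct (pencil_vertical_estimates B s sg HB HG Hnorm Hs HsB Ha Hsg Hpos)
    as [HE [HX HN]].
  exists 0, (sg * s).
  pose proof (Hpos 0 (sg * s)) as HE0.
  set (E := pencil_eta 0 (sg * s)) in *. set (X := pencil_xi 0 (sg * s)) in *.
  set (N := pencil_norm 0 (sg * s)) in *.
  assert (HXX : s * s <= X * X <= 9 * (s * s)).
  { replace (X * X) with ((sg * X) * (sg * X)) by (destruct Hsg as [-> | ->]; ring).
    split; nra. }
  assert (HEs : E <= s) by nra.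
  split; [lra|]. split; [|split; [lra|]].
  - assert (HEE : E * E <= s * s) by nra.
    assert (Hee : 49 * (s * s) <= eps * eps) by nra.
    assert (HNN : / 4 <= N * N) by nra.
    assert (49 * (s * s) * / 4 <= eps * eps * (N * N)) by nra.
    lra.
  - assert (HEN : E * N <= 2 * (s * s * (B + 1))) by nra.
    nra.
Qed.
End Pencil.

Section InnerProduct.
Variable H : CHilbert.
Notation ip := (hinner H).

Lemma ip_scal_r a x y : ip x (hscal H a y) = Cmul (Cconj a) (ip x y).
Proof.
  rewrite (hinner_conj H (hscal H a y) x), hinner_scal_l, (hinner_conj H x y).
  destruct a, (ip x y). apply Cx_eq; simpl; ring.
Qed.

Lemma ip_add_r x y z : ip x (hadd H y z) = Cadd (ip x y) (ip x z).
Proof.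
  rewrite (hinner_conj H (hadd H y z) x), hinner_add_l,
    (hinner_conj H x y), (hinner_conj H x z).
  destruct (ip x y), (ip x z). apply Cx_eq; simpl; ring.
Qed.

Lemma ip_self_im x : im (ip x x) = 0.
Proof.
  pose proof (hinner_conj H x x) as E. destruct (ip x x) as [a b].
  injection E. simpl. lra.
Qed.

Lemma ip_zero_r y : ip y (hzero H) = Czero.
Proof.
  assert (E0 : ip (hzero H) y = Czero).
  { pose proof (hinner_add_l H (hzero H) (hzero H) y) as E.
    rewrite hadd_0 in E. destruct (ip (hzero H) y) as [a b].
    injection E. intros. apply Cx_eq; simpl; lra. }
  rewrite (hinner_conj H (hzero H) y), E0. apply Cx_eq; simpl; lra.
Qed.

Lemma hnorm_sq x : hnorm H x * hnorm H x = re (ip x x).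
Proof. apply sqrt_sqrt, hinner_pos. Qed.

Lemma hnorm_unit x : hnorm H x = 1 -> ip x x = Cone.
Proof.
  intro Hx. pose proof (hnorm_sq x) as E. rewrite Hx in E.
  apply Cx_eq; simpl; [lra | apply ip_self_im].
Qed.
End InnerProduct.

Section Operator.
Variables (H : CHilbert) (D : H -> Prop) (A : H -> H).
Hypothesis Hlin : linear_operator H D A.
Notation ip := (hinner H).

Definition rayleigh (x : H) : Cx :=
  mkCx (re (ip (A x) x) / re (ip x x)) (im (ip (A x) x) / re (ip x x)).

(* <(A - lam) x, x>, using that <x, x> is real. *)
Definition shifted_form (lam : Cx) (x : H) : Cx :=
  mkCx (re (ip (A x) x) - re (ip x x) * re lam) (im (ip (A x) x) - re (ip x x) * im lam).

Lemma Num_rayleigh x : D x -> 0 < re (ip x x) -> Num H D A (rayleigh x).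
Proof.
  intros Dx Hx. destruct Hlin as [_ [_ [Dscal [_ Ascal]]]].
  set (N := re (ip x x)) in *. set (k := / sqrt N).
  assert (Hk : k * k = / N).
  { unfold k. rewrite <- Rinv_mult, sqrt_sqrt; lra. }
  exists (hscal H (mkCx k 0) x). split; [apply Dscal, Dx|split].
  - unfold hnorm. rewrite hinner_scal_l, ip_scal_r. simpl.
    rewrite (ip_self_im H x). fold N.
    replace (k * (k * N - - 0 * 0) - 0 * (k * 0 + - 0 * N)) with (k * k * N) by ring.
    rewrite Hk, Rinv_l, sqrt_1; lra.
  - rewrite Ascal by exact Dx. rewrite hinner_scal_l, ip_scal_r.
    unfold rayleigh. fold N. destruct (ip (A x) x) as [p1 p2].
    apply Cx_eq; simpl; unfold Rdiv; rewrite <- Hk; ring.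
Qed.

Lemma rayleigh_coords (lam n : Cx) x : 0 < re (ip x x) ->
  eta_c lam n (rayleigh x) * re (ip x x) = re (Cmul (shifted_form lam x) (Cconj n)) /\
  xi_c lam n (rayleigh x) * re (ip x x) = im (Cmul (shifted_form lam x) (Cconj n)).
Proof.
  intro Hx. unfold eta_c, xi_c, rayleigh, shifted_form.
  destruct lam, n; simpl. split; field; lra.
Qed.

Lemma shifted_form_supp (lam n : Cx) x :
  supp_normal (Cclosure (Num H D A)) lam n -> D x ->
  0 <= re (Cmul (shifted_form lam x) (Cconj n)).
Proof.
  intros [_ Hsupp] Dx.
  destruct (Req_dec (re (ip x x)) 0) as [Hx0 | Hx0].
  - apply hinner_def in Hx0. subst x.
    unfold shifted_form. rewrite !ip_zero_r. simpl. lra.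
  - assert (Hx : 0 < re (ip x x)) by (pose proof (hinner_pos H x); lra).
    destruct (rayleigh_coords lam n x Hx) as [Heta _].
    rewrite <- Heta. apply Rmult_le_pos; [|lra].
    apply Hsupp, Cclosure_self, Num_rayleigh; assumption.
Qed.

Lemma rayleigh_above_parabola (lam n : Cx) (sg M eps : R) x :
  above_parabola (Cclosure (Num H D A)) lam n sg M eps ->
  D x -> 0 < re (ip x x) ->
  let E := re (Cmul (shifted_form lam x) (Cconj n)) in
  let X := im (Cmul (shifted_form lam x) (Cconj n)) in
  let N := re (ip x x) in
  X * X + E * E <= eps * eps * (N * N) -> 0 < sg * X -> M * (X * X) <= E * N.
Proof.
  intros Hcurv Dx Hx E X N Hnear Hside.
  destruct (rayleigh_coords lam n x Hx) as [Heta Hxi].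
  pose proof (Hcurv _ (Cclosure_self _ _ (Num_rayleigh x Dx Hx))) as Hz. cbv zeta in Hz.
  set (xi := xi_c lam n (rayleigh x)) in *. set (eta := eta_c lam n (rayleigh x)) in *.
  unfold E, X, N in *. clear E X N. rewrite <- Heta, <- Hxi in *.
  set (N := re (ip x x)) in *.
  assert (HNN : 0 < N * N) by nra.
  assert (Hbound : M * (xi * xi) <= eta).
  { apply Hz.
    - apply Rmult_le_reg_r with (N * N); [exact HNN | nra].
    - apply Rmult_lt_reg_r with N; [exact Hx | nra]. }
  nra.
Qed.
End Operator.

Lemma small_scale_exists (B eps : R) : 1 <= B -> 0 < eps ->
  exists s, 0 < s /\ s * B <= / 8 /\ 7 * s <= eps.
Proof.
  intros HB Heps. exists (Rmin (/ (8 * B)) (eps / 7)). split; [|split].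
  - apply Rmin_pos; [apply Rinv_0_lt_compat |]; lra.
  - replace (/ 8) with (/ (8 * B) * B) by (field; lra).
    apply Rmult_le_compat_r; [lra | apply Rmin_l].
  - pose proof (Rmin_r (/ (8 * B)) (eps / 7)). lra.
Qed.

Lemma resolvent_unit_image (H : CHilbert) (D : H -> Prop) (A : H -> H) (lam : Cx)
  (Res : H -> H) (K : R) :
  (forall x, hnorm H (Res x) <= K * hnorm H x) ->
  (forall x, D (Res x) /\ hsub H (A (Res x)) (hscal H lam (Res x)) = x) ->
  forall f, hnorm H f = 1 ->
  D (Res f) /\ A (Res f) = hadd H f (hscal H lam (Res f)) /\
  re (hinner H (Res f) (Res f)) <= K * K.
Proof.
  intros HK HRes f Hf. destruct (HRes f) as [Dg Hg]. pose proof (HK f) as Hgf.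
  set (g := Res f) in *. split; [exact Dg | split].
  - rewrite <- Hg. unfold hsub.
    rewrite <- hadd_assoc, (hadd_comm H (hopp H _)), hadd_opp, hadd_0. reflexivity.
  - rewrite <- hnorm_sq. rewrite Hf, Rmult_1_r in Hgf.
    assert (0 <= hnorm H g) by apply sqrt_pos. nra.
Qed.

Section ResolventPencil.
Variables (H : CHilbert) (D : H -> Prop) (A : H -> H).
Hypothesis Hlin : linear_operator H D A.
Notation ip := (hinner H).
Variables (lam n : Cx) (f g : H).
Hypotheses (Hn : Cabs n = 1) (Df : D f) (Dg : D g)
  (HAg : A g = hadd H f (hscal H lam g)) (Hf : ip f f = Cone).

Definition pencil_vector (t : Cx) : H := hadd H f (hscal H (Cmul t n) g).

Definition pencil_a : Cx := Cmul (Csub (ip (A f) f) lam) (Cconj n).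
Definition pencil_b : Cx := Cmul (ip f g) (Cconj n).
Definition pencil_d : Cx :=
  Cadd (Cmul (Csub (ip (A f) g) (Cmul lam (ip f g))) (Cmul (Cconj n) (Cconj n))) Cone.

Lemma pencil_vector_dom t : D (pencil_vector t).
Proof. destruct Hlin as [_ [Dadd [Dscal _]]]. apply Dadd; [exact Df | apply Dscal, Dg]. Qed.

Lemma pencil_vector_expansion t1 t2 :
  let x := pencil_vector (mkCx t1 t2) in
  re (ip x x) = pencil_norm (re pencil_b) (im pencil_b) (re (ip g g)) t1 t2 /\
  re (Cmul (shifted_form H A lam x) (Cconj n)) =
    pencil_eta (re pencil_a) (re pencil_d) (im pencil_d) (re pencil_b) t1 t2 /\
  im (Cmul (shifted_form H A lam x) (Cconj n)) =
    pencil_xi (im pencil_a) (re pencil_d) (im pencil_d) (im pencil_b) t1 t2.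
Proof.
  destruct Hlin as [_ [_ [Dscal [Aadd Ascal]]]]. pose proof (Cabs_unit n Hn) as Hn1.
  cbv zeta. unfold pencil_vector, shifted_form.
  rewrite Aadd, Ascal, HAg by auto.
  rewrite !hinner_add_l, !ip_add_r, !hinner_scal_l, !ip_scal_r, !hinner_add_l,
    !hinner_scal_l, Hf, (hinner_conj H f g).
  pose proof (ip_self_im H g) as Hg.
  unfold pencil_a, pencil_b, pencil_d, pencil_norm, pencil_eta, pencil_xi.
  destruct (ip g g) as [G G']; simpl in Hg; subst G'.
  destruct (ip f g) as [q1 q2], (ip (A f) f) as [p1 p2], (ip (A f) g) as [r1 r2],
    lam as [l1 l2], n as [n1 n2]; simpl in *.
  split; [|split]; clear - Hn1; nsatz.
Qed.

Lemma resolvent_pencil_not_above (B s sg eps : R) :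
  supp_normal (Cclosure (Num H D A)) lam n -> (sg = 1 \/ sg = -1) ->
  1 <= B -> re (ip g g) <= B -> 0 < s -> s * B <= / 8 -> 7 * s <= eps ->
  Cabs (Csub lam (ip (A f) f)) < s * s / (64 * B) ->
  ~ above_parabola (Cclosure (Num H D A)) lam n sg (2 * B + 3) eps.
Proof.
  intros Hsupp Hsg HB HG Hs HsB Heps Hclose Habove.
  pose proof pencil_vector_expansion as Hexp. cbv zeta in Hexp.
  destruct (pencil_flat_point (re pencil_a) (im pencil_a) (re pencil_d) (im pencil_d)
    (re pencil_b) (im pencil_b) (re (ip g g)) B s sg eps)
    as [t1 [t2 [HN [Hnear [Hside Hlt]]]]]; trivial.
  - split; [apply hinner_pos | exact HG].
  - intros t1 t2. rewrite <- (proj1 (Hexp t1 t2)). apply hinner_pos.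
  - unfold pencil_a. rewrite Cabs_rotate, Cabs_Csub_sym by exact Hn.
    assert (0 <= Cabs (Csub lam (ip (A f) f))) by apply sqrt_pos. nra.
  - intros t1 t2. rewrite <- (proj1 (proj2 (Hexp t1 t2))).
    apply (shifted_form_supp H D A Hlin); [exact Hsupp | apply pencil_vector_dom].
  - destruct (Hexp t1 t2) as [EN [EE EX]].
    apply (Rlt_not_le _ _ Hlt). rewrite <- EN, <- EE, <- EX.
    apply (rayleigh_above_parabola H D A Hlin lam n sg _ eps).
    + exact Habove.
    + apply pencil_vector_dom.
    + rewrite EN. exact HN.
    + rewrite EN, EE, EX. exact Hnear.
    + rewrite EX. exact Hside.
Qed.
End ResolventPencil.

Theorem mainTheorem3 (H : CHilbert) (D : H -> Prop) (A : H -> H)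
  (Hlin : linear_operator H D A)
  (Hdense : densely_defined H D)
  (Hclosed : closed_operator H D A)
  (Hint : exists z, Cinterior (Num H D A) z)
  (Hnotall : exists z, ~ Num H D A z)
  (Hdom : forall f, D f -> adjoint_domain H D A f)
  (lam : Cx)
  (Hbd : Cboundary (Num H D A) lam)
  (Hcurv : unilateral_infinite_curvature (Cclosure (Num H D A)) lam) :
  spectrum H D A lam.
Proof.
  intros [Res [_ [_ [[K HK] [HRes _]]]]].
  destruct Hcurv as [n [[Hsupp _] Hgam]].
  destruct (unilateral_curves_away _ lam n Hgam) as [sg [Hsg Hside]].
  apply (curves_away_boundary _ _ _ _ Hsupp) in Hside.
  (* [B] bounds <g, g> for every unit f, as it must since f is chosen after [s]. *)
  set (B := K * K + 1). assert (HB : 1 <= B) by (unfold B; nra).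
  destruct (Hside (2 * B + 3)) as [eps [Heps Habove]].
  destruct (small_scale_exists B eps HB Heps) as [s [Hs [HsB Hseps]]].
  assert (He : 0 < s * s / (64 * B)) by (apply Rdiv_lt_0_compat; nra).
  destruct (proj1 Hbd _ He) as [w [[f [Df [Hf Hw]]] Hclose]]. subst w.
  destruct (resolvent_unit_image H D A lam Res K HK HRes f Hf) as [Dg [HAg HG]].
  apply (resolvent_pencil_not_above H D A Hlin lam n f (Res f) (proj1 Hsupp) Df Dg HAg
    (hnorm_unit H f Hf) B s sg eps); trivial.
  unfold B. lra.
Qed.
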